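(* Let $m,n$ be integers with $1<m<n-1$. Then there exist infinitely many $x\in\mathrm{Gr}(m,n)(\mathbb{Q})$ with $\ell(x)=0$.
   Context: For integers $1\le m\le n-1$, rational points $x\in\mathrm{Gr}(m,n)(\mathbb{Q})$ (the $m$-dimensional linear subspaces $W\subset\mathbb{Q}^n$) are identified with primitive lattices $\Lambda=W\cap\mathbb{Z}^n$ of rank $m$; a sublattice $\Lambda\subset\mathbb{Z}^n$ is primitive if $\Lambda_{\mathbb{R}}\cap\mathbb{Z}^n=\Lambda$, where $\Lambda_{\mathbb{R}}$ denotes the real span of $\Lambda$. All lattices live in Euclidean spaces, and $\mathrm{covol}(L)=\sqrt{\det(\langle b_i,b_j\rangle)_{i,j}}$ for any basis $(b_i)$ of $L$. The anticanonical height is $H(x)=\mathrm{covol}(\Lambda)^n$ and $h(x)=\log H(x)$. The dual lattice is $\Lambda^*=\{y\in\Lambda_{\mathbb{R}}:\langle y,z\rangle\in\mathbb{Z}\ \forall z\in\Lambda\}$; the factor lattice $\Lambda^\pi$ is the image of $\mathbb{Z}^n$ under the orthogonal projection $\mathbb{R}^n\to\Lambda_{\mathbb{R}}^\perp$. The tangent lattice is $T_\Lambda=\Lambda^*\otimes_{\mathbb{Z}}\Lambda^\pi$, a lattice of rank $m(n-m)$ in $\mathbb{R}^n\otimes\mathbb{R}^n$ with inner product $\langle a\otimes b,c\otimes d\rangle=\langle a,c\rangle\langle b,d\rangle$. For a lattice $L$ of rank $r$, its slope is $\mu(L)=-\frac1r\log\mathrm{covol}(L)$; the maximal slope $\mu_{\max}(L)$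 is the maximum of $\mu(M)$ over nonzero sublattices $M\subseteq L$; the minimal slope $\mu_{\min}(L)$ is the minimum of $\mu(L/M)$ over primitive sublattices $M\subsetneq L$, where $L/M$ is identified with the orthogonal projection of $L$ onto $M_{\mathbb{R}}^\perp\cap L_{\mathbb{R}}$. The freeness of $x$ (with $H(x)>1$) is $\ell(x)=\max\{m(n-m)\mu_{\min}(T_\Lambda),0\}/h(x)\in[0,1]$. *)

From HB Require Import structures.
From mathcomp Require Import all_boot all_order all_algebra.
From mathcomp Require Import all_classical all_reals all_analysis.
Set Implicit Arguments. Unset Strict Implicit. Unset Printing Implicit Defensive.
Import Order.TTheory GRing.Theory Num.Theory.
Local Open Scope classical_set_scope.
Local Open Scope ring_scope.

Section Lattices.
Variable R : realType.

Definition dot (N : nat) (u v : 'rV[R]_N) : R := \sum_(i < N) u 0 i * v 0 i.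

Definition is_basis (N : nat) (L : set 'rV[R]_N) (B : seq 'rV[R]_N) : Prop :=
  free B /\
  L = [set v | exists z : 'I_(size B) -> int, v = \sum_(i < size B) (z i)%:~R *: B`_i].

Definition is_lattice (N : nat) (L : set 'rV[R]_N) : Prop := exists B, is_basis L B.

Definition lbasis (N : nat) (L : set 'rV[R]_N) : seq 'rV[R]_N := xget [::] (is_basis L).

Definition rank (N : nat) (L : set 'rV[R]_N) : nat := size (lbasis L).

Definition gram (N : nat) (B : seq 'rV[R]_N) : 'M[R]_(size B) :=
  \matrix_(i, j) dot B`_i B`_j.

Definition covol (N : nat) (L : set 'rV[R]_N) : R := Num.sqrt (\det (gram (lbasis L))).

Definition slope (N : nat) (L : set 'rV[R]_N) : R := - ln (covol L) / (rank L)%:R.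

Definition rspan (N : nat) (L : set 'rV[R]_N) : set 'rV[R]_N :=
  [set v | exists s : seq 'rV[R]_N, (forall x, x \in s -> L x) /\ v \in span s].

Definition perp_proj (N : nat) (V : set 'rV[R]_N) (v : 'rV[R]_N) : 'rV[R]_N :=
  xget 0 [set w | V (v - w) /\ forall u, V u -> dot w u = 0].

Definition sublattice (N : nat) (M L : set 'rV[R]_N) : Prop := is_lattice M /\ M `<=` L.

Definition primitive_in (N : nat) (M L : set 'rV[R]_N) : Prop :=
  sublattice M L /\ rspan M `&` L = M.

(* L/M, identified with the orthogonal projection of L onto M_R^perp ∩ L_R *)
Definition quot (N : nat) (L M : set 'rV[R]_N) : set 'rV[R]_N := perp_proj (rspan M) @` L.

Definition mu_min (N : nat) (L : set 'rV[R]_N) : R :=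
  inf [set slope (quot L M) | M in [set M | primitive_in M L /\ M <> L]].

Definition Zn (n : nat) : set 'rV[R]_n := [set map_mx (fun z : int => z%:~R) z | z in [set: 'rV[int]_n]].

(* rational points of Gr(m,n) as primitive rank-m sublattices of Z^n *)
Definition grass_pt (m n : nat) (L : set 'rV[R]_n) : Prop :=
  primitive_in L (@Zn n) /\ rank L = m.

Definition dual (N : nat) (L : set 'rV[R]_N) : set 'rV[R]_N :=
  [set y | rspan L y /\ forall z, L z -> exists k : int, dot y z = k%:~R].

Definition factor (n : nat) (L : set 'rV[R]_n) : set 'rV[R]_n := perp_proj (rspan L) @` @Zn n.

(* a ⊗ b in R^n ⊗ R^n = R^(n*n); <a⊗b, c⊗d> = <a,c><b,d> *)
Definition tens (n : nat) (a b : 'rV[R]_n) : 'rV[R]_(n * n) := mxvec (a^T *m b).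

Definition tensor_lattice (n : nat) (A B : set 'rV[R]_n) : set 'rV[R]_(n * n) :=
  [set v | exists s : seq ('rV[R]_n * 'rV[R]_n),
     (forall p, p \in s -> A p.1 /\ B p.2) /\ v = \sum_(p <- s) tens p.1 p.2].

Definition tangent (n : nat) (L : set 'rV[R]_n) : set 'rV[R]_(n * n) :=
  tensor_lattice (dual L) (factor L).

Definition height (n : nat) (L : set 'rV[R]_n) : R := covol L ^+ n.
Definition logheight (n : nat) (L : set 'rV[R]_n) : R := ln (height L).

Definition freeness (m n : nat) (L : set 'rV[R]_n) : R :=
  Num.max ((m * (n - m))%N%:R * mu_min (tangent L)) 0 / logheight L.

End Lattices.

From Pilot Require Import Defs.
From HB Require Import structures.
From mathcomp Require Import all_boot all_order all_algebra.
From mathcomp Require Import all_classical all_reals all_analysis.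
From mathcomp Require Import zify ring lra.
Import Order.TTheory GRing.Theory Num.Theory.
Local Open Scope classical_set_scope.
Local Open Scope ring_scope.
Set Implicit Arguments. Unset Strict Implicit. Unset Printing Implicit Defensive.

(* Take K = k + 1 (k : nat; called tilt below) and let L_k be the
   lattice spanned by e_0, ..., e_(m-2) and u = e_(m-1) + K e_m.  Together
   with v = K e_(m-1) - e_m and e_(m+1), ..., e_(n-1) this gives an orthogonal
   basis of R^n made of integer vectors.  For lattices with orthogonal bases
   everything is explicit: L_k is primitive in Z^n, its dual and factor
   lattices are spanned by the dual bases s / <s, s>, and its tangent lattice
   is spanned by the (orthogonal) pure tensors of these dual bases.  The
   tangent lattice thus has an orthogonal basis containing the unit vector
   e_0 ⊗ e_(m+1); splitting it off gives a quotient of slope 0, so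
   mu_min(T_L) <= 0 and l(L_k) = 0.  Finally covol(L_k)^2 = 1 + K^2, so the
   L_k are pairwise distinct and of height > 1. *)

Section OrthogonalFamilies.
Variables (R : realType) (N : nat).
Implicit Types (u v w : 'rV[R]_N) (S C T : seq 'rV[R]_N).

Lemma dotC u v : dot u v = dot v u.
Proof. by apply: eq_bigr => i _; rewrite mulrC. Qed.

Lemma dotDl u v w : dot (u + v) w = dot u w + dot v w.
Proof. by rewrite /dot -big_split; apply: eq_bigr => i _; rewrite mxE mulrDl. Qed.

Lemma dotZl a u w : dot (a *: u) w = a * dot u w.
Proof. by rewrite /dot mulr_sumr; apply: eq_bigr => i _; rewrite mxE mulrA. Qed.

Lemma dotBl u v w : dot (u - v) w = dot u w - dot v w.
Proof. by rewrite dotDl -scaleN1r dotZl mulN1r. Qed.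

Lemma dotZr a u w : dot w (a *: u) = a * dot w u.
Proof. by rewrite dotC dotZl dotC. Qed.

Lemma dotDr u v w : dot w (u + v) = dot w u + dot w v.
Proof. by rewrite dotC dotDl !(dotC w). Qed.

Lemma dotBr u v w : dot w (u - v) = dot w u - dot w v.
Proof. by rewrite dotC dotBl !(dotC w). Qed.

Lemma dot0l w : dot 0 w = 0.
Proof. by rewrite -(scale0r 0) dotZl mul0r. Qed.

Lemma dot_suml (I : Type) (r : seq I) (P : pred I) (F : I -> 'rV[R]_N) w :
  dot (\sum_(i <- r | P i) F i) w = \sum_(i <- r | P i) dot (F i) w.
Proof.
exact: (big_morph (fun x => dot x w) (fun x y => dotDl x y w) (dot0l w)).
Qed.

Lemma dot_sumr (I : Type) (r : seq I) (P : pred I) (F : I -> 'rV[R]_N) w :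
  dot w (\sum_(i <- r | P i) F i) = \sum_(i <- r | P i) dot w (F i).
Proof. by rewrite dotC dot_suml; apply: eq_bigr => i _; rewrite dotC. Qed.

Lemma dot_eq0 u : dot u u = 0 -> u = 0.
Proof.
move=> /eqP; rewrite /dot psumr_eq0 => [/allP uu0|i _]; last by rewrite -expr2 sqr_ge0.
apply/rowP => j; rewrite mxE; have := uu0 j (mem_index_enum _).
by rewrite /= mulf_eq0 orbb => /eqP.
Qed.

Definition Zspan S : set 'rV[R]_N :=
  [set v | exists z : 'I_(size S) -> int, v = \sum_(i < size S) (z i)%:~R *: S`_i].

Lemma Zspan_mem S s : s \in S -> Zspan S s.
Proof.
move=> sS; pose i := Ordinal (etrans (index_mem s S) sS).
exists (fun j => (j == i)%:Z); rewrite (bigD1 i) //= eqxx scale1r nth_index //.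
by rewrite big1 ?addr0 // => j /negbTE ->; rewrite scale0r.
Qed.

Lemma ZspanZ S (k : int) v : Zspan S v -> Zspan S (k%:~R *: v).
Proof.
case=> z ->; exists (fun i => k * z i); rewrite scaler_sumr.
by apply: eq_bigr => i _; rewrite scalerA intrM.
Qed.

Lemma Zspan_sum S (I : eqType) (r : seq I) (F : I -> 'rV[R]_N) :
  (forall i, i \in r -> Zspan S (F i)) -> Zspan S (\sum_(i <- r) F i).
Proof.
move=> SF; rewrite big_seq; elim/big_ind: _ => // [|x y [z ->] [w ->]].
  by exists (fun _ => 0); rewrite big1 // => i _; rewrite scale0r.
exists (fun i => z i + w i); rewrite -big_split.
by apply: eq_bigr => i _; rewrite intrD scalerDl.
Qed.

Lemma Zspan_span S v : Zspan S v -> v \in <<S>>%VS.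
Proof.
by case=> z ->; rewrite rpred_sum // => i _; rewrite rpredZ // memv_span // mem_nth.
Qed.

Lemma rspan_Zspan S : rspan (Zspan S) = [set v | v \in <<S>>%VS].
Proof.
apply/seteqP; split => v /=; last by move=> vS; exists S; split => // x /Zspan_mem.
case=> s [sS vs]; have sub : (span s <= span S)%VS.
  by apply/span_subvP => x /sS /Zspan_span.
exact: subvP sub v vs.
Qed.

Definition orthfam S := [/\ uniq S,
  {in S &, forall s t, s != t -> dot s t = 0} & {in S, forall s, 0 < dot s s}].

Lemma orthfam_nth S (i j : 'I_(size S)) : orthfam S ->
  dot S`_i S`_j = if i == j then dot S`_i S`_i else 0.
Proof.
case=> uS oS _; case: eqP => [->//|/eqP ij]; apply: oS; rewrite ?mem_nth //.
by rewrite nth_uniq.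
Qed.

Lemma orthfam_perm S T : perm_eq S T -> orthfam S -> orthfam T.
Proof.
move=> ST [uS oS pS]; have memST := perm_mem ST.
split; first by rewrite -(perm_uniq ST).
  by move=> s t; rewrite -!memST; apply: oS.
by move=> s; rewrite -memST; apply: pS.
Qed.

Lemma orthfam_gt0 S s : orthfam S -> s \in S -> 0 < dot s s.
Proof. by case=> _ _; apply. Qed.

Lemma orthfam_sub S C : uniq C -> {subset C <= S} -> orthfam S -> orthfam C.
Proof.
move=> uC CS [_ oS pS]; split => // [s t /CS sS /CS tS|s /CS sS].
  exact: oS.
exact: pS.
Qed.

Lemma orthfam_cat S C :
  orthfam S -> orthfam C -> {in S & C, forall s c, dot s c = 0} -> orthfam (S ++ C).
Proof.
move=> [uS oS pS] [uC oC pC] oSC.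
have pSC : {in S ++ C, forall s, 0 < dot s s}.
  by move=> s; rewrite mem_cat => /orP[/pS|/pC].
split => //.
- rewrite cat_uniq uS uC andbT /=; apply/hasPn => c cC; apply/negP => cS.
  by have := pC c cC; rewrite oSC // ltxx.
- move=> s t; rewrite !mem_cat => /orP[sS|sC] /orP[tS|tC] st.
  + exact: oS.
  + exact: oSC.
  + by rewrite dotC oSC.
  + exact: oC.
Qed.

Lemma orth_span S w : {in S, forall s, dot w s = 0} ->
  forall u, u \in <<S>>%VS -> dot w u = 0.
Proof.
move=> wS u uS; rewrite (coord_span (X := in_tuple S) uS) dot_sumr big1 // => i _.
by rewrite dotZr wS ?mulr0 // mem_nth.
Qed.

Lemma dot_sum_orth S (c : 'rV[R]_N -> R) s0 : orthfam S -> s0 \in S ->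
  dot (\sum_(s <- S) c s *: s) s0 = c s0 * dot s0 s0.
Proof.
move=> [uS oS _] s0S; rewrite dot_suml (bigD1_seq s0) //= dotZl.
by rewrite big_seq_cond big1 ?addr0 // => s /andP[sS ns]; rewrite dotZl oS ?mulr0.
Qed.

Lemma orth_expand S v : orthfam S -> v \in <<S>>%VS ->
  v = \sum_(s <- S) (dot v s / dot s s) *: s.
Proof.
move=> oS vS; apply/eqP; rewrite -subr_eq0; apply/eqP.
set x := v - _; have xS : x \in <<S>>%VS.
  rewrite rpredB // big_seq rpred_sum // => s sS; exact/rpredZ/memv_span.
apply/dot_eq0/(orth_span _ xS) => t tS.
by rewrite dotBl dot_sum_orth // mulfVK ?subrr // gt_eqF // (orthfam_gt0 oS).
Qed.

Lemma orth_span_inj S u v : orthfam S -> u \in <<S>>%VS -> v \in <<S>>%VS ->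
  {in S, forall s, dot u s = dot v s} -> u = v.
Proof.
move=> oS uS vS uv; rewrite (orth_expand oS uS) (orth_expand oS vS).
by apply: eq_big_seq => s sS; rewrite uv.
Qed.

Lemma orthfam_free S : orthfam S -> free S.
Proof.
move=> oS; apply/(freeP (X := in_tuple S)) => k k0 i.
have := congr1 (fun x => dot x S`_i) k0; rewrite dot_suml /= (bigD1 i) //= big1 ?addr0.
  rewrite dotZl dot0l => /eqP; rewrite mulf_eq0 => /orP[/eqP //|].
  by rewrite gt_eqF // (orthfam_gt0 oS) // mem_nth.
by move=> j ji; rewrite dotZl (orthfam_nth j i oS) (negbTE ji) mulr0.
Qed.

Lemma ZspanP S v : orthfam S ->
  Zspan S v <-> v \in <<S>>%VS /\ {in S, forall s, dot v s / dot s s \is a Num.int}.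
Proof.
move=> oS; split => [Sv|[vS vSint]]; last first.
  exists (fun i => Num.floor (dot v S`_i / dot S`_i S`_i)).
  rewrite {1}(orth_expand oS vS) (big_nth 0) big_mkord; apply: eq_bigr => i _.
  by rewrite floorK // vSint // mem_nth.
split; first exact: Zspan_span.
case: Sv => z -> s sS; rewrite -(nth_index 0 sS).
pose i := Ordinal (etrans (index_mem s S) sS); rewrite -[index s S]/(val i).
rewrite dot_suml (bigD1 i) //= big1 ?addr0.
  by rewrite dotZl mulfK ?intr_int // nth_index // gt_eqF // (orthfam_gt0 oS).
by move=> j ji; rewrite dotZl (orthfam_nth j i oS) (negbTE ji) mulr0.
Qed.

Lemma Zspan_perm S T : perm_eq S T -> orthfam S -> Zspan S = Zspan T.
Proof.
move=> ST oS; have oT := orthfam_perm ST oS; have memST := perm_mem ST.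
apply/seteqP; split => v; rewrite (ZspanP _ oS) (ZspanP _ oT) (eq_span memST).
  by case=> vT vint; split => // s; rewrite -memST; apply: vint.
by case=> vT vint; split => // s; rewrite memST; apply: vint.
Qed.

Lemma perp_projE S v w : v - w \in <<S>>%VS ->
  (forall u, u \in <<S>>%VS -> dot w u = 0) ->
  perp_proj [set u | u \in <<S>>%VS] v = w.
Proof.
move=> vwS wS; apply: xget_unique => [//|y [vyS yS]].
have ywS : y - w \in <<S>>%VS.
  have -> : y - w = (v - w) - (v - y) by rewrite opprB [RHS]addrC [RHS]addrA subrK.
  by rewrite rpredB.
apply/eqP; rewrite -subr_eq0; apply/eqP/dot_eq0.
by rewrite dotBl yS // wS // subrr.
Qed.

End OrthogonalFamilies.

Section Covolume.
Variables (R : realType) (N : nat).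
Implicit Types (S B C : seq 'rV[R]_N) (L : set 'rV[R]_N).

Definition rowsmx S : 'M[R]_(size S, N) := \matrix_(i, j) S`_i 0 j.

Lemma gram_rowsmx S : gram S = rowsmx S *m (rowsmx S)^T.
Proof.
by apply/matrixP => i j; rewrite !mxE; apply: eq_bigr => k _; rewrite !mxE.
Qed.

Lemma rowsmx_inj S : free S -> forall w : 'rV_(size S), w *m rowsmx S = 0 -> w = 0.
Proof.
move=> /(freeP (X := in_tuple S)) freeS w; rewrite mulmx_sum_row => w0.
apply/rowP => i; rewrite mxE; apply: (freeS (fun i => w 0 i)) => //.
rewrite -[RHS]w0; apply: eq_bigr => j _; congr (_ *: _).
by apply/rowP => k; rewrite !mxE.
Qed.

(* Two families of rows related by mutually inverse integer matrices, the first
   linearly independent, have Gram matrices of equal determinant: the change of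
   basis is unimodular. *)
Lemma det_gram_unimodular p q (X : 'M[R]_(p, N)) (Y : 'M[R]_(q, N))
    (U : 'M[int]_(q, p)) (V : 'M[int]_(p, q)) : p = q ->
  Y = map_mx intr U *m X -> X = map_mx intr V *m Y ->
  (forall w : 'rV_p, w *m X = 0 -> w = 0) -> \det (X *m X^T) = \det (Y *m Y^T).
Proof.
move=> epq; subst q => YUX XVY X_inj.
have VU : map_mx intr V *m map_mx intr U = 1 :> 'M[R]_p.
  apply/row_matrixP => i; apply/eqP; rewrite -subr_eq0; apply/eqP.
  rewrite -linearB /=; apply: X_inj.
  rewrite -row_mul mulmxBl -mulmxA -YUX -XVY mul1mx subrr.
  by apply/rowP => j; rewrite !mxE.
have detU2 : (\det (map_mx (intr : int -> R) U)) ^+ 2 = 1.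
  have : (\det V * \det U)%:~R = 1 :> R.
    by rewrite -det_mulmx -(det_map_mx (intr : {rmorphism int -> R})) map_mxM VU det1.
  rewrite -[1]/((1%:Z)%:~R) => /eqP; rewrite eqr_int => /eqP /intUnitRing.unitzPl.
  rewrite (det_map_mx (intr : {rmorphism int -> R})).
  by rewrite qualifE /= => /orP[] /eqP ->; rewrite ?expr1n // sqrrN expr1n.
rewrite YUX trmx_mul; set A := map_mx intr U.
have -> : A *m X *m (X^T *m A^T) = A *m (X *m X^T) *m A^T by rewrite !mulmxA.
by rewrite !det_mulmx det_tr mulrAC -expr2 detU2 mul1r.
Qed.

Lemma basis_span L B C : is_basis L B -> is_basis L C -> (span B <= span C)%VS.
Proof.
move=> [_ LB] [_ LC]; apply/span_subvP => x xB.
have : Zspan B x by apply: Zspan_mem.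
by rewrite /Zspan -LB LC; apply: Zspan_span.
Qed.

Lemma basis_size L B C : is_basis L B -> is_basis L C -> size B = size C.
Proof.
move=> bB bC; have eBC : span B = span C.
  by apply/subv_anti/andP; split; apply: basis_span; eassumption.
by move: bB bC => [/eqP fB _] [/eqP fC _]; rewrite -fB -fC eBC.
Qed.

Lemma basis_change L B C : is_basis L B -> is_basis L C ->
  exists U : 'M[int]_(size C, size B), rowsmx C = map_mx intr U *m rowsmx B.
Proof.
move=> [_ LB] [_ LC].
have coefs (j : 'I_(size C)) : exists z : 'I_(size B) -> int,
    C`_j = \sum_(i < size B) (z i)%:~R *: B`_i.
  have : Zspan C C`_j by apply: Zspan_mem; rewrite mem_nth.
  by rewrite /Zspan -LC LB.
have [f Hf] := choice coefs.
exists (\matrix_(j, i) f j i); apply/matrixP => j k; rewrite !mxE Hf summxE.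
by apply: eq_bigr => i _; rewrite !mxE.
Qed.

Lemma basis_det_gram L B C : is_basis L B -> is_basis L C ->
  \det (gram B) = \det (gram C).
Proof.
move=> bB bC; have [U BU] := basis_change bB bC; have [V BV] := basis_change bC bB.
rewrite !gram_rowsmx; apply: (det_gram_unimodular (U := U) (V := V)) => //.
  exact: basis_size bB bC.
by apply: rowsmx_inj; case: bB.
Qed.

Lemma covol_basis L B : is_basis L B -> covol L = Num.sqrt (\det (gram B)).
Proof.
move=> bB; rewrite /covol /lbasis; congr Num.sqrt; apply: (basis_det_gram (L := L)) => //.
by apply: xgetPex; exists B.
Qed.

Lemma rank_basis L B : is_basis L B -> rank L = size B.
Proof.
move=> bB; rewrite /rank /lbasis; apply: (basis_size (L := L)) => //.
by apply: xgetPex; exists B.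
Qed.

Lemma orthfam_basis S : orthfam S -> is_basis (Zspan S) S.
Proof. by move=> oS; split => //; apply: orthfam_free. Qed.

(* The Gram matrix of an orthogonal family is diagonal. *)
Lemma det_gram_orth S : orthfam S -> \det (gram S) = \prod_(s <- S) dot s s.
Proof.
move=> oS; have -> : gram S = diag_mx (\row_(i < size S) dot S`_i S`_i).
  apply/matrixP => i j; rewrite !mxE (orthfam_nth i j oS).
  by case: (i == j); rewrite ?mulr1n ?mulr0n.
by rewrite det_diag (big_nth 0) big_mkord; apply: eq_bigr => i _; rewrite mxE.
Qed.

End Covolume.

Section DualAndFactor.
Variables (R : realType) (N : nat).
Implicit Types (u v w x y : 'rV[R]_N) (S C : seq 'rV[R]_N).

(* The vector dual to u in the dual basis of an orthogonal family containing u. *)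
Definition dualv u := (dot u u)^-1 *: u.

Lemma dot_dualv u v : dot (dualv u) (dualv v) = (dot u u)^-1 * (dot v v)^-1 * dot u v.
Proof. by rewrite /dualv dotZl dotZr mulrA. Qed.

Lemma dualv_coef y s : 0 < dot s s -> dot y (dualv s) / dot (dualv s) (dualv s) = dot y s.
Proof. by move=> s_gt0; rewrite dot_dualv /dualv dotZr; field; rewrite gt_eqF. Qed.

Lemma orthfam_dualv S : orthfam S -> orthfam (map dualv S).
Proof.
move=> [uS oS pS]; have pdS s : s \in S -> 0 < dot (dualv s) (dualv s).
  by move=> sS; rewrite dot_dualv mulrAC mulVf ?gt_eqF ?pS // mul1r invr_gt0 pS.
split.
- rewrite map_inj_in_uniq // => s t sS tS st; have [//|nst] := eqVneq s t.
  by have := pdS s sS; rewrite {2}st dot_dualv (oS s t) // mulr0 ltxx.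
- move=> _ _ /mapP[s sS ->] /mapP[t tS ->] nst; rewrite dot_dualv (oS s t) ?mulr0 //.
  by apply: contraNneq nst => ->.
- by move=> _ /mapP[s sS ->]; apply: pdS.
Qed.

Lemma span_dualv S : orthfam S -> <<map dualv S>>%VS = <<S>>%VS.
Proof.
move=> oS; apply/subv_anti/andP; split; apply/span_subvP => x.
  by move=> /mapP[s sS ->]; rewrite rpredZ // memv_span.
move=> xS; have -> : x = dot x x *: dualv x.
  by rewrite /dualv scalerA divff ?scale1r // gt_eqF // (orthfam_gt0 oS).
by rewrite rpredZ // memv_span // map_f.
Qed.

Lemma dual_Zspan S : orthfam S -> dual (Zspan S) = Zspan (map dualv S).
Proof.
move=> oS; have odS := orthfam_dualv oS.
apply/seteqP; split => y.
  rewrite /dual /= rspan_Zspan /= => -[yS yint]; apply/(ZspanP _ odS).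
  split; first by rewrite span_dualv.
  move=> _ /mapP[s sS ->]; rewrite dualv_coef ?(orthfam_gt0 oS) //.
  by have [k ->] := yint s (Zspan_mem sS); rewrite intr_int.
move=> /(ZspanP _ odS) [yS yint]; split; first by rewrite /= rspan_Zspan /= -span_dualv.
move=> _ [z ->]; rewrite dot_sumr; apply/intrP; rewrite rpred_sum // => i _.
have sS : S`_i \in S by rewrite mem_nth.
by rewrite dotZr rpredM ?intr_int // -dualv_coef ?(orthfam_gt0 oS) ?yint ?map_f.
Qed.

Definition intvec u := forall j, u 0 j \is a Num.int.

Lemma ZnP x : Zn x <-> intvec x.
Proof.
split => [[z _ <-] j|xint]; first by rewrite mxE intr_int.
exists (map_mx (fun r => Num.floor r) x) => //.
by apply/matrixP => i j; rewrite !mxE ord1 floorK.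
Qed.

Lemma dot_int u v : intvec u -> intvec v -> dot u v \is a Num.int.
Proof. by move=> uint vint; rewrite rpred_sum // => i _; rewrite rpredM. Qed.

(* Every vector of S has an integer "dual witness": a point of Z^N whose inner
   products with S single out that vector.  This certifies that the Fourier
   coefficients of integer vectors are integers. *)
Definition dual_witnessed S :=
  {in S, forall s, exists x, Zn x /\ {in S, forall t, dot x t = (t == s)%:R}}.

Lemma coef_witness S v s x : orthfam S -> v \in <<S>>%VS -> s \in S ->
  {in S, forall t, dot x t = (t == s)%:R} -> dot v s / dot s s = dot v x.
Proof.
move=> oS vS sS xS; rewrite [in RHS](orth_expand oS vS) dot_suml.
rewrite (bigD1_seq s) //=; last by case: oS.
rewrite dotZl (dotC s x) xS // eqxx mulr1.
rewrite big_seq_cond big1 ?addr0 // => t /andP[tS ts].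
by rewrite dotZl (dotC t x) xS // (negbTE ts) mulr0.
Qed.

Lemma dualv_unit s : dot s s = 1 -> dualv s = s.
Proof. by move=> s1; rewrite /dualv s1 invr1 scale1r. Qed.

Lemma dualv_witness S s x : orthfam S -> s \in S -> Zn x ->
  {in S, forall t, dot x t = dot (dualv s) t} ->
  exists x, Zn x /\ {in S, forall t, dot x t = (t == s)%:R}.
Proof.
move=> [_ oS pS] sS Zx xS; exists x; split => // t tS; rewrite xS // /dualv dotZl.
have [->|ts] := eqVneq t s; first by rewrite mulVf // gt_eqF // pS.
have st : s != t by rewrite eq_sym.
by rewrite (oS s t) // mulr0.
Qed.

Lemma primitive_Zspan S : orthfam S -> {in S, forall s, intvec s} ->
  dual_witnessed S -> primitive_in (Zspan S) (@Zn R N).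
Proof.
move=> oS Sint Swit; have SZn : Zspan S `<=` @Zn R N.
  move=> _ [z ->]; apply/ZnP => j; rewrite summxE rpred_sum // => i _.
  by rewrite mxE rpredM ?intr_int // Sint // mem_nth.
split; first by split => //; exists S; apply: orthfam_basis.
apply/seteqP; split => [v [/=]|v Sv]; last first.
  by split; [rewrite rspan_Zspan; apply: Zspan_span | apply: SZn].
rewrite rspan_Zspan /= => vS /ZnP vint; apply/(ZspanP _ oS); split => // s sS.
have [x [/ZnP xint xS]] := Swit s sS.
by rewrite (coef_witness oS vS sS xS) dot_int.
Qed.

Lemma span_full S : free S -> size S = N -> forall x, x \in <<S>>%VS.
Proof.
move=> freeS sizeS x; have /eqP -> : <<S>>%VS == fullv.
  by rewrite eqEdim subvf dimvf /= dim_matrix (eqP freeS) sizeS mul1r.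
exact: memvf.
Qed.

Definition orth_proj C x := \sum_(c <- C) (dot x c / dot c c) *: c.

Lemma orth_proj_span C x : orth_proj C x \in <<C>>%VS.
Proof. by rewrite /orth_proj big_seq rpred_sum // => c cC; rewrite rpredZ // memv_span. Qed.

Lemma dot_orth_proj C x c : orthfam C -> c \in C -> dot (orth_proj C x) c = dot x c.
Proof.
by move=> oC cC; rewrite dot_sum_orth // mulfVK // gt_eqF // (orthfam_gt0 oC).
Qed.

Lemma dual_witness_fun S : dual_witnessed S -> exists g : 'rV[R]_N -> 'rV[R]_N,
  {in S, forall s, Zn (g s) /\ {in S, forall t, dot (g s) t = (t == s)%:R}}.
Proof.
move=> Swit; have wit s : exists x, s \in S ->
    Zn x /\ {in S, forall t, dot x t = (t == s)%:R}.
  by case: (boolP (s \in S)) => [/Swit [x xP]|]; [exists x | exists 0].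
by have [g gP] := choice wit; exists g => s /gP.
Qed.

Lemma perp_proj_cat S C x : orthfam (S ++ C) -> x \in <<S ++ C>>%VS ->
  perp_proj [set u | u \in <<S>>%VS] x = orth_proj C x.
Proof.
move=> oSC xSC; apply: perp_projE => [|u uS].
  rewrite {1}(orth_expand oSC xSC) big_cat /= /orth_proj addrK.
  by rewrite big_seq rpred_sum // => s sS; rewrite rpredZ // memv_span.
apply: (orth_span _ uS) => s sS; rewrite dot_suml big1_seq // => c /andP[_ cC].
case: oSC; rewrite cat_uniq => /and3P[_ /hasPn CnS _] oSC _.
have cs : c != s by apply/eqP => cs; move: (CnS c cC); rewrite /= cs sS.
by rewrite dotZl (oSC c s) ?mulr0 //; rewrite mem_cat ?sS ?cC ?orbT.
Qed.

Lemma factor_Zspan S C : orthfam (S ++ C) -> size (S ++ C) = N ->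
  {in C, forall c, intvec c} -> dual_witnessed C ->
  Defs.factor (Zspan S) = Zspan (map dualv C).
Proof.
move=> oSC sizeSC Cint Cwit.
have oC : orthfam C.
  case: (oSC); rewrite cat_uniq => /and3P[_ _ uC] _ _.
  by apply: (orthfam_sub uC _ oSC) => c cC; rewrite mem_cat cC orbT.
have odC := orthfam_dualv oC; have Cgt0 := orthfam_gt0 oC.
have projSC x : perp_proj [set u | u \in <<S>>%VS] x = orth_proj C x.
  exact/(perp_proj_cat oSC)/span_full/sizeSC/orthfam_free.
have [g gP] := dual_witness_fun Cwit.
rewrite /Defs.factor rspan_Zspan; apply/seteqP; split => y.
  case=> x /ZnP xint <-; rewrite projSC; apply/(ZspanP _ odC); split.
    by rewrite span_dualv // orth_proj_span.
  move=> _ /mapP[c cC ->]; rewrite dualv_coef ?Cgt0 // dot_orth_proj //.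
  exact: dot_int xint (Cint c cC).
move=> /(ZspanP _ odC) [yC yint].
have yCint c : c \in C -> dot y c \is a Num.int.
  by move=> cC; rewrite -(dualv_coef y (Cgt0 c cC)) yint ?map_f.
exists (\sum_(c <- C) (Num.floor (dot y c))%:~R *: g c).
  apply/ZnP => j; rewrite summxE big_seq rpred_sum // => c cC.
  by rewrite mxE rpredM ?intr_int //; have [/ZnP gint _] := gP c cC.
rewrite projSC; apply: (orth_span_inj oC (orth_proj_span _ _)).
  by rewrite -span_dualv.
move=> c cC; rewrite dot_orth_proj // dot_suml (bigD1_seq c) //=; last by case: oC.
rewrite big_seq_cond big1 => [|t /andP[tC tc]]; last first.
  by rewrite dotZl; have [_ ->] := gP t tC; rewrite // eq_sym (negbTE tc) mulr0.
by rewrite dotZl; have [_ ->] := gP c cC; rewrite // eqxx mulr1 addr0 floorK ?yCint.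
Qed.

End DualAndFactor.

Arguments dualv {R N}.

Section Tensors.
Variables (R : realType) (n : nat).
Implicit Types (a b c d : 'rV[R]_n) (A B : seq 'rV[R]_n).

Lemma tensE a b i j : tens a b 0 (mxvec_index i j) = a 0 i * b 0 j.
Proof. by rewrite /tens mxvecE !mxE big_ord1 !mxE. Qed.

Lemma dot_tens a b c d : dot (tens a b) (tens c d) = dot a c * dot b d.
Proof.
rewrite /dot (reindex _ (curry_mxvec_bij n n)) /=.
transitivity (\sum_(p : 'I_n * 'I_n) (a 0 p.1 * c 0 p.1) * (b 0 p.2 * d 0 p.2)).
  by apply: eq_bigr => -[i j] _ /=; rewrite !tensE mulrACA.
by rewrite -(pair_bigA _ (fun i j => (a 0 i * c 0 i) * (b 0 j * d 0 j))) big_distrlr.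
Qed.

Lemma tens_suml (I : Type) (r : seq I) (F : I -> 'rV[R]_n) c :
  tens (\sum_(i <- r) F i) c = \sum_(i <- r) tens (F i) c.
Proof.
apply: (big_morph (fun x => tens x c)) => [x y|]; rewrite /tens.
  by rewrite linearD /= mulmxDl linearD.
by rewrite linear0 mul0mx linear0.
Qed.

Lemma tens_sumr (I : Type) (r : seq I) (F : I -> 'rV[R]_n) c :
  tens c (\sum_(i <- r) F i) = \sum_(i <- r) tens c (F i).
Proof.
apply: (big_morph (fun x => tens c x)) => [x y|]; rewrite /tens.
  by rewrite mulmxDr linearD.
by rewrite mulmx0 linear0.
Qed.

Lemma tensZ k l a b : tens (k *: a) (l *: b) = (k * l) *: tens a b.
Proof.
have tensZl c : tens (k *: a) c = k *: tens a c.
  by rewrite /tens linearZ /= -scalemxAl linearZ.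
by rewrite tensZl /tens -scalemxAr linearZ scalerA.
Qed.

Lemma tensor_Zspan A B :
  tensor_lattice (Zspan A) (Zspan B) = Zspan [seq tens x y | x <- A, y <- B].
Proof.
apply/seteqP; split => v.
  case=> s [sAB ->]; apply: Zspan_sum => p /sAB [[z ->] [w ->]].
  rewrite tens_suml; apply: Zspan_sum => i _; rewrite tens_sumr.
  apply: Zspan_sum => j _; rewrite tensZ -intrM.
  by apply/ZspanZ/Zspan_mem; apply: allpairs_f; rewrite mem_nth.
case=> z ->; elim/big_ind: _ => [|x y [s [sAB ->]] [t [tAB ->]]|i _].
- by exists [::]; rewrite big_nil.
- exists (s ++ t); rewrite big_cat; split => // p.
  by rewrite mem_cat => /orP[/sAB|/tAB].
have /allpairsP [[a b] [aA bB ->]] := mem_nth 0 (ltn_ord i).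
exists [:: ((z i)%:~R *: a, b)]; rewrite big_seq1 /= -[in RHS](scale1r b) tensZ mulr1.
split => // p; rewrite inE => /eqP -> /=.
by split; [apply/ZspanZ/Zspan_mem | apply: Zspan_mem].
Qed.

Lemma orthfam_tens A B : orthfam A -> orthfam B ->
  orthfam [seq tens x y | x <- A, y <- B].
Proof.
move=> [uA oA pA] [uB oB pB].
have otens a b c d : a \in A -> b \in B -> c \in A -> d \in B -> (a, b) != (c, d) ->
    dot (tens a b) (tens c d) = 0.
  move=> aA bB cA dB; rewrite dot_tens; have [<-|ac] := eqVneq a c.
    by rewrite xpair_eqE eqxx /= => bd; rewrite (oB b d) ?mulr0.
  by rewrite (oA a c) ?mul0r.
have ptens a b : a \in A -> b \in B -> 0 < dot (tens a b) (tens a b).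
  by move=> aA bB; rewrite dot_tens; apply: mulr_gt0; [apply: pA | apply: pB].
split.
- apply: allpairs_uniq => // -[a b] [c d] /allpairsP [[a' b'] [/= aA bB [-> ->]]].
  move=> /allpairsP [[c' d'] [/= cA dB [-> ->]]] /= eq_ab; apply/eqP.
  by apply: contraT => ne; have := ptens a' b' aA bB; rewrite {2}eq_ab otens ?ltxx.
- move=> _ _ /allpairsP [[a b] [/= aA bB ->]] /allpairsP [[c d] [/= cA dB ->]] ne.
  by apply: otens => //; apply: contraNneq ne => -[-> ->].
- by move=> _ /allpairsP [[a b] [/= aA bB ->]]; apply: ptens.
Qed.

End Tensors.

Section SplitOffVector.
Variables (R : realType) (N : nat).
Implicit Types (S T : seq 'rV[R]_N) (E : 'rV[R]_N).

Lemma orth_head_span E S : orthfam (E :: S) -> forall u, u \in <<S>>%VS -> dot E u = 0.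
Proof.
move=> [/= /andP[ES _] oES _]; apply: orth_span => s sS.
by rewrite oES ?inE ?eqxx ?sS ?orbT //; apply: contraNneq ES => ->.
Qed.

Lemma orthfam_behead E S : orthfam (E :: S) -> orthfam S.
Proof.
move=> oES; apply: (orthfam_sub _ _ oES) => [|s sS]; last by rewrite inE sS orbT.
by case: oES => /andP[].
Qed.

Lemma Zspan_cons_sub E S : orthfam (E :: S) -> Zspan S `<=` Zspan (E :: S).
Proof.
move=> oES v /(ZspanP _ (orthfam_behead oES)) [vS vint].
apply/(ZspanP _ oES); split.
  by apply: subvP vS; apply: sub_span => s sS; rewrite inE sS orbT.
move=> s; rewrite inE => /orP[/eqP ->|/vint //].
by rewrite dotC (orth_head_span oES vS) mul0r rpred0.
Qed.

Lemma primitive_Zspan_cons E S : orthfam (E :: S) ->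
  primitive_in (Zspan S) (Zspan (E :: S)) /\ Zspan S <> Zspan (E :: S).
Proof.
move=> oES; have oS := orthfam_behead oES; split; last first.
  move=> eS; have : Zspan S E by rewrite eS; apply: Zspan_mem; rewrite inE eqxx.
  move=> /Zspan_span /(orth_head_span oES) E0.
  by have := orthfam_gt0 oES (mem_head E S); rewrite E0 ltxx.
split; first by split; [exists S; apply: orthfam_basis | apply: Zspan_cons_sub].
apply/seteqP; split => [v []|v Sv]; last first.
  by split; [rewrite rspan_Zspan; apply: Zspan_span | apply: Zspan_cons_sub].
rewrite rspan_Zspan /= => vS /(ZspanP _ oES) [_ vint]; apply/(ZspanP _ oS).
by split => // s sS; apply: vint; rewrite inE sS orbT.
Qed.

Lemma quot_Zspan_cons E S : orthfam (E :: S) ->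
  quot (Zspan (E :: S)) (Zspan S) = Zspan [:: E].
Proof.
move=> oES; have pES : perm_eq (E :: S) (S ++ [:: E]) by rewrite -cat1s perm_catC.
have oSE := orthfam_perm pES oES.
have projE t : Zspan (E :: S) t ->
    perp_proj (rspan (Zspan S)) t = (dot t E / dot E E) *: E.
  move=> /Zspan_span tES; rewrite rspan_Zspan (perp_proj_cat oSE).
    by rewrite /orth_proj big_seq1.
  by rewrite -(eq_span (perm_mem pES)).
have ES : E \in E :: S := mem_head E S.
apply/seteqP; split => [_ [t Et <-]|_ [z ->]].
  rewrite projE //; have /(ZspanP _ oES) [_ /(_ E ES) /intrP [k ->]] := Et.
  exact/ZspanZ/Zspan_mem/mem_head.
rewrite big_ord1 /=; set y := _ *: E; have Ey : Zspan (E :: S) y.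
  exact/ZspanZ/Zspan_mem.
exists y => //; rewrite projE // /y dotZl mulfK // gt_eqF //.
exact: orthfam_gt0 oES ES.
Qed.

Lemma slope_unit (E : 'rV[R]_N) : dot E E = 1 -> slope (Zspan [:: E]) = 0.
Proof.
move=> E1; have oE : orthfam [:: E].
  split => // [s t|s]; rewrite !inE => /eqP-> //; first by move=> /eqP->; rewrite eqxx.
  by rewrite E1.
rewrite /slope (covol_basis (orthfam_basis oE)) (det_gram_orth oE) big_seq1 E1.
by rewrite sqrtr1 ln1 oppr0 mul0r.
Qed.

(* In R, inf X = 0 when X is not bounded below; so any set containing 0 has
   a nonpositive infimum. *)
Lemma inf_le0 (X : set R) : X 0 -> inf X <= 0.
Proof.
move=> X0; have [lbX|nlbX] := pselect (has_lbound X); first exact: ge_inf lbX _ X0.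
by rewrite inf_out // => -[].
Qed.

(* A lattice with an orthogonal basis containing a unit vector E has a
   quotient isometric to Z E, of slope 0; hence its minimal slope is <= 0. *)
Lemma mu_min_unit (T : seq 'rV[R]_N) E : orthfam T -> E \in T -> dot E E = 1 ->
  mu_min (Zspan T) <= 0.
Proof.
move=> oT ET E1; have pT := perm_to_rem ET.
rewrite (Zspan_perm pT oT); have oES := orthfam_perm pT oT.
have [primS neqS] := primitive_Zspan_cons oES.
apply: inf_le0; exists (Zspan (rem E T)) => //.
by rewrite quot_Zspan_cons // slope_unit.
Qed.

End SplitOffVector.

(* The standard basis vectors e_i of R^n (e_i = 0 for i >= n): integer, and
   orthonormal. *)
Section StandardBasis.
Variables (R : realType) (n : nat).

Definition stdvec (i : nat) : 'rV[R]_n := \row_(j < n) (i == j)%:R.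
Local Notation e := stdvec.

Lemma stdvec_int i : intvec (e i).
Proof. by move=> j; rewrite mxE; case: (_ == _); rewrite ?rpred0 ?rpred1. Qed.

Lemma dot_stdvec_neq i j : i != j -> dot (e i) (e j) = 0.
Proof.
move=> ij; rewrite /dot big1 // => l _; rewrite !mxE.
by have [<-|_] := eqVneq i l; rewrite ?mul0r // eq_sym (negbTE ij) mulr0.
Qed.

Lemma dot_stdvec i : (i < n)%N -> dot (e i) (e i) = 1.
Proof.
move=> ltin; rewrite /dot (bigD1 (Ordinal ltin)) //= !mxE eqxx mulr1 big1 ?addr0 //.
move=> l li; rewrite !mxE; have -> : (i == l) = false; last by rewrite mul0r.
by apply: contraNF li => /eqP il; apply/eqP/val_inj.
Qed.

Lemma orthfam_stdvec (I : seq nat) : uniq I -> {in I, forall i, (i < n)%N} ->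
  orthfam [seq e i | i <- I].
Proof.
move=> uI In; split.
- rewrite map_inj_in_uniq // => i j iI jI eij; have [//|ij] := eqVneq i j.
  have := dot_stdvec (In i iI); rewrite {2}eij dot_stdvec_neq // => /eqP.
  by rewrite eq_sym oner_eq0.
- move=> _ _ /mapP[i iI ->] /mapP[j jI ->] eij; apply: dot_stdvec_neq.
  by apply: contraNneq eij => ->.
- by move=> _ /mapP[i iI ->]; rewrite dot_stdvec ?ltr01 ?In.
Qed.

End StandardBasis.

Arguments dot_stdvec {R n i}.

Section Construction.
Variables (R : realType) (n m k : nat).
Hypotheses (m_gt1 : (1 < m)%N) (m_lt : (m < n - 1)%N).
Local Notation e := (@stdvec R n).

Let m1_lt_n : (m.-1 < n)%N. Proof. lia. Qed.
Let m_lt_n : (m < n)%N. Proof. lia. Qed.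
Let m1_neq_m : m.-1 != m. Proof. lia. Qed.
Let m_neq_m1 : m != m.-1. Proof. lia. Qed.

Definition tilt : R := k.+1%:R.
Definition tilt_u : 'rV[R]_n := e m.-1 + tilt *: e m.
Definition tilt_v : 'rV[R]_n := tilt *: e m.-1 - e m.

Definition basisL := [seq e i | i <- iota 0 m.-1] ++ [:: tilt_u].
Definition basisC := tilt_v :: [seq e i | i <- iota m.+1 (n - m.+1)].

Lemma dot_tilt_uu : dot tilt_u tilt_u = 1 + tilt ^+ 2.
Proof.
rewrite /tilt_u !(dotDl, dotDr, dotZl, dotZr) !dot_stdvec // !dot_stdvec_neq //; ring.
Qed.

Lemma dot_tilt_vv : dot tilt_v tilt_v = 1 + tilt ^+ 2.
Proof.
rewrite /tilt_v !(dotBl, dotBr, dotZl, dotZr) !dot_stdvec // !dot_stdvec_neq //; ring.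
Qed.

Lemma dot_tilt_uv : dot tilt_u tilt_v = 0.
Proof.
rewrite /tilt_u /tilt_v !(dotDl, dotBr, dotZl, dotZr) !dot_stdvec //.
by rewrite !dot_stdvec_neq //; ring.
Qed.

Lemma dot_stdvec_u i : i != m.-1 -> i != m -> dot (e i) tilt_u = 0.
Proof. by move=> i1 im; rewrite dotDr dotZr !dot_stdvec_neq // mulr0 addr0. Qed.

Lemma dot_stdvec_v i : i != m.-1 -> i != m -> dot (e i) tilt_v = 0.
Proof. by move=> i1 im; rewrite dotBr dotZr !dot_stdvec_neq // mulr0 subr0. Qed.

Lemma orthfam_basisLC : orthfam (basisL ++ basisC).
Proof.
pose I := iota 0 m.-1 ++ iota m.+1 (n - m.+1).
have memI i : i \in I -> [/\ (i < n)%N, i != m.-1 & i != m].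
  by rewrite mem_cat !mem_iota => /orP[] /andP[]; split; lia.
have perm_LC : perm_eq ([seq e i | i <- I] ++ [:: tilt_u; tilt_v]) (basisL ++ basisC).
  by apply/permP => p; rewrite /basisL /basisC !(count_cat, map_cat) /=; lia.
apply: (orthfam_perm perm_LC); apply: orthfam_cat.
- apply: orthfam_stdvec => [|i /memI[] //]; rewrite cat_uniq !iota_uniq andbT /=.
  by apply/hasPn => i; rewrite !mem_iota; lia.
- have uv_gt0 : 0 < 1 + tilt ^+ 2 by have := sqr_ge0 tilt; lra.
  split => /=.
  + rewrite inE andbT; apply/eqP => uv; move: dot_tilt_uv; rewrite uv dot_tilt_vv; lra.
  + move=> s t; rewrite !inE => /orP[]/eqP-> /orP[]/eqP->; rewrite ?eqxx //.
      by rewrite dot_tilt_uv.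
    by rewrite dotC dot_tilt_uv.
  + by move=> s; rewrite !inE => /orP[]/eqP->; rewrite ?dot_tilt_uu ?dot_tilt_vv.
- move=> _ t /mapP[i /memI[_ i1 im] ->]; rewrite !inE => /orP[]/eqP->.
    exact: dot_stdvec_u.
  exact: dot_stdvec_v.
Qed.

Lemma orthfam_basisL : orthfam basisL.
Proof.
have [uLC _ _] := orthfam_basisLC; move: uLC; rewrite cat_uniq => /and3P[uL _ _].
by apply: (orthfam_sub uL _ orthfam_basisLC) => s sL; rewrite mem_cat sL.
Qed.

Lemma orthfam_basisC : orthfam basisC.
Proof.
have [uLC _ _] := orthfam_basisLC; move: uLC; rewrite cat_uniq => /and3P[_ _ uC].
by apply: (orthfam_sub uC _ orthfam_basisLC) => s sC; rewrite mem_cat sC orbT.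
Qed.

Lemma size_basisLC : size (basisL ++ basisC) = n.
Proof. by rewrite /basisL /basisC !size_cat /= !size_map !size_iota; lia. Qed.

Lemma basisLC_int : {in basisL ++ basisC, forall s, intvec s}.
Proof.
move=> s; rewrite /basisL /basisC !(mem_cat, inE) -!orbA.
move=> /or4P[/mapP[i _ ->]|/eqP->|/eqP->|/mapP[i _ ->]] j; rewrite ?stdvec_int //.
  by rewrite !mxE rpredD ?rpredM ?natr_int.
by rewrite !mxE rpredB ?rpredM ?natr_int.
Qed.

(* The dual vector of tilt_u has integer witness e_(m-1). *)
Lemma basisL_witnessed : dual_witnessed basisL.
Proof.
have oL := orthfam_basisL; move=> s sL; have [_ _ pL] := oL.
have ltL i : i \in iota 0 m.-1 -> [/\ (i < n)%N, i != m.-1 & i != m].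
  by rewrite mem_iota => /andP[]; split; lia.
move: (sL); rewrite mem_cat inE => /orP[/mapP[i /ltL[lin _ _] si]|/eqP si]; subst s.
  apply: (dualv_witness oL sL (x := e i)); first exact/ZnP/stdvec_int.
  by move=> t _; rewrite dualv_unit ?dot_stdvec.
apply: (dualv_witness oL sL (x := e m.-1)); first exact/ZnP/stdvec_int.
move=> t; rewrite /dualv dotZl mem_cat inE => /orP[/mapP[i /ltL[_ i1 im] ->]|/eqP->].
  by rewrite (dotC tilt_u) dot_stdvec_u // mulr0 dot_stdvec_neq // eq_sym.
rewrite mulVf ?dot_tilt_uu; last by rewrite -dot_tilt_uu gt_eqF // pL.
by rewrite dotDr dotZr dot_stdvec // dot_stdvec_neq // mulr0 addr0.
Qed.

(* The dual vector of tilt_v has integer witness - e_m. *)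
Lemma basisC_witnessed : dual_witnessed basisC.
Proof.
have oC := orthfam_basisC; move=> s sC; have [_ _ pC] := oC.
have gtC j : j \in iota m.+1 (n - m.+1) -> [/\ (j < n)%N, j != m.-1 & j != m].
  by rewrite mem_iota => /andP[]; split; lia.
move: (sC); rewrite inE => /orP[/eqP si|/mapP[j /gtC[ljn _ _] si]]; subst s; last first.
  apply: (dualv_witness oC sC (x := e j)); first exact/ZnP/stdvec_int.
  by move=> t _; rewrite dualv_unit ?dot_stdvec.
apply: (dualv_witness oC sC (x := - e m)).
  by apply/ZnP => j; rewrite mxE rpredN stdvec_int.
move=> t; rewrite /dualv dotZl inE => /orP[/eqP->|/mapP[j /gtC[_ j1 jm] ->]].
  rewrite mulVf ?dot_tilt_vv; last by rewrite -dot_tilt_vv gt_eqF // pC.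
  rewrite -scaleN1r dotZl dotBr dotZr dot_stdvec // dot_stdvec_neq //.
  by rewrite mulr0 sub0r mulrN1 opprK.
rewrite (dotC tilt_v) dot_stdvec_v // mulr0 -scaleN1r dotZl.
by rewrite dot_stdvec_neq ?mulr0 // eq_sym.
Qed.

Lemma grass_pt_basisL : grass_pt m (Zspan basisL).
Proof.
split.
  apply: primitive_Zspan orthfam_basisL _ basisL_witnessed => s sL.
  by apply: basisLC_int; rewrite mem_cat sL.
rewrite (rank_basis (orthfam_basis orthfam_basisL)) size_cat size_map size_iota /=.
lia.
Qed.

Lemma covol_basisL : covol (Zspan basisL) = Num.sqrt (1 + tilt ^+ 2).
Proof.
rewrite (covol_basis (orthfam_basis orthfam_basisL)) (det_gram_orth orthfam_basisL).
rewrite big_cat big_seq1 big_map big_seq big1 ?dot_tilt_uu ?Monoid.mul1m // => i.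
by rewrite mem_iota => /andP[_ lti]; rewrite dot_stdvec //; lia.
Qed.

Lemma height_basisL : 1 < height (Zspan basisL).
Proof.
have tilt2_gt0 : 0 < tilt ^+ 2 by rewrite exprn_gt0 // ltr0n.
rewrite /height covol_basisL expr_gt1 ?sqrtr_ge0 //; last by lia.
by rewrite -[X in X < _]sqrtr1 ltr_sqrt; lra.
Qed.

Lemma tangent_basisL : tangent (Zspan basisL) =
  Zspan [seq tens x y | x <- map dualv basisL, y <- map dualv basisC].
Proof.
rewrite /tangent (dual_Zspan orthfam_basisL).
rewrite (factor_Zspan orthfam_basisLC size_basisLC _ basisC_witnessed) ?tensor_Zspan //.
by move=> c cC; apply: basisLC_int; rewrite mem_cat cC orbT.
Qed.

Lemma mu_min_tangent : mu_min (tangent (Zspan basisL)) <= 0.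
Proof.
have e_mem i (S : seq 'rV[R]_n) : (i < n)%N -> e i \in S -> e i \in map dualv S.
  by move=> lin eS; rewrite -(dualv_unit (dot_stdvec lin)) map_f.
rewrite tangent_basisL; apply: (mu_min_unit (E := tens (e 0) (e m.+1))).
- exact: orthfam_tens (orthfam_dualv orthfam_basisL) (orthfam_dualv orthfam_basisC).
- apply: allpairs_f; apply: e_mem; rewrite ?mem_cat ?inE ?map_f ?mem_iota ?orbT //; lia.
- by rewrite dot_tens !dot_stdvec ?mulr1 //; lia.
Qed.

Lemma freeness_basisL : freeness m (Zspan basisL) = 0.
Proof.
rewrite /freeness max_r ?mul0r // mulr_ge0_le0 ?ler0n //; exact: mu_min_tangent.
Qed.

End Construction.

(* The lattices L_k are pairwise distinct: their covolumes sqrt (1 + (k+1)^2)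
   are. *)
Lemma basisL_inj (R : realType) (n m : nat) : (1 < m)%N -> (m < n - 1)%N ->
  injective (fun k => Zspan (basisL R n m k)).
Proof.
move=> m_gt1 m_lt k1 k2 /(congr1 (@covol R n)); rewrite !covol_basisL //.
move=> /(congr1 (fun x => x ^+ 2)); rewrite !sqr_sqrtr ?addr_ge0 ?sqr_ge0 //.
by move=> /addrI /eqP; rewrite /tilt -!natrX eqr_nat eqn_exp2r // => /eqP [].
Qed.

Lemma infinite_range (T : Type) (f : nat -> T) : injective f -> infinite_set (range f).
Proof.
move=> f_inj; rewrite (eq_finite_set (inj_card_eq (A := [set: nat]) (in2W f_inj))).
exact: infinite_nat.
Qed.

Theorem theorem1p1 (R : realType) (m n : nat) :
  (1 < m)%N -> (m < n - 1)%N ->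
  infinite_set [set L : set 'rV[R]_n |
    grass_pt m L /\ 1 < height L /\ freeness m L = 0].
Proof.
move=> m_gt1 m_lt; apply: sub_infinite_set (infinite_range (basisL_inj m_gt1 m_lt)).
move=> _ [k _ <-]; split; first exact: grass_pt_basisL.
by split; [exact: height_basisL | exact: freeness_basisL].
Qed.
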